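(* Let $(X,Y,\phi)$ be an $L$-context and $X'\subseteq X$, $Y'\subseteq Y$, and let $S_1,S_2\colon\mathcal{K}\phi\to\mathcal{K}\phi_{X',Y'}$ and $F_1,F_2\colon\mathcal{K}\phi_{X',Y'}\to\mathcal{K}\phi$ be the maps $S_1\mu=(\phi_{X',Y'})^\forall(\phi_{X',Y'})^\exists\mu_{X'}$, $S_2\mu=\big((\phi_{X,Y'})^\forall(\phi_{X,Y'})^\exists\mu\big)_{X'}$, $F_1\mu'=\phi^\forall\phi^\exists\underline{\mu'}$, $F_2\mu'=(\phi_{X,Y'})^\forall(\phi_{X,Y'})^\exists\underline{\mu'}$. Then: (1) $(F_1\mu')_{X'}=(F_2\mu')_{X'}$ for all $\mu'\in\mathcal{K}\phi_{X',Y'}$; (2) each of the composites $S_1F_1$, $S_1F_2$, $S_2F_1$, $S_2F_2$ equals the identity map of $\mathcal{K}\phi_{X',Y'}$.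
   Context: $L=(L,* )$ is a complete residuated lattice: a complete lattice with bottom $0$ and top $1$, equipped with a commutative associative operation $*$ with unit $1$ satisfying $a*\bigvee_i b_i=\bigvee_i a*b_i$; $\to$ is its residuum ($a*b\le c\iff a\le b\to c$). An $L$-context is a triple $(X,Y,\phi)$ with $X,Y$ sets and $\phi\colon X\times Y\to L$. $L^X$ is the set of maps $X\to L$ with $L$-order $L^X(\mu,\mu')=\bigwedge_{x}(\mu(x)\to\mu'(x))$. $(\phi^\exists\mu)(y)=\bigvee_{x\in X}\mu(x)*\phi(x,y)$ for $\mu\in L^X$, and $(\phi^\forall\lambda)(x)=\bigwedge_{y\in Y}(\phi(x,y)\to\lambda(y))$ for $\lambda\in L^Y$. $\mathcal{K}\phi=\{\mu\in L^X\mid\phi^\forall\phi^\exists\mu=\mu\}$. For $X'\subseteq X$, $Y'\subseteq Y$, $\phi_{X',Y'}$ is the restriction of $\phi$ to $X'\times Y'$ (an $L$-context $(X',Y',\phi_{X',Y'})$); $\mu_{X'}$ is the restriction of $\mu\in L^X$ to $X'$; for $\mu'\in L^{X'}$, $\underline{\mu'}\in L^X$ is the extension of $\mu'$ by $0$ outside $X'$. (The maps $S_i,F_i$ are well defined with the stated domains and codomains.) *)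

From Stdlib Require Import ClassicalEpsilon.

Record crl := CRL {
  car :> Type;
  le : car -> car -> Prop;
  le_refl : forall a, le a a;
  le_trans : forall a b c, le a b -> le b c -> le a c;
  le_antisym : forall a b, le a b -> le b a -> a = b;
  sup : (car -> Prop) -> car;
  sup_ub : forall (S : car -> Prop) a, S a -> le a (sup S);
  sup_least : forall (S : car -> Prop) b, (forall a, S a -> le a b) -> le (sup S) b;
  inf : (car -> Prop) -> car;
  inf_lb : forall (S : car -> Prop) a, S a -> le (inf S) a;
  inf_greatest : forall (S : car -> Prop) b, (forall a, S a -> le b a) -> le b (inf S);
  bot : car;
  top : car;
  bot_le : forall a, le bot a;
  le_top : forall a, le a top;
  mul : car -> car -> car;
  mulC : forall a b, mul a b = mul b a;
  mulA : forall a b c, mul a (mul b c) = mul (mul a b) c;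
  mul1 : forall a, mul top a = a;
  mul_sup : forall a (S : car -> Prop),
      mul a (sup S) = sup (fun c => exists b, S b /\ c = mul a b);
  res : car -> car -> car;
  residuation : forall a b c, le (mul a b) c <-> le a (res b c)
}.

Arguments sup {_} S.
Arguments inf {_} S.
Arguments bot {_}.
Arguments mul {_} a b.
Arguments res {_} a b.

Section Ops.
Context {L : crl}.

Definition phiE {A B : Type} (phi : A -> B -> L) (mu : A -> L) : B -> L :=
  fun y => sup (fun c => exists x, c = mul (mu x) (phi x y)).

Definition phiA {A B : Type} (phi : A -> B -> L) (lam : B -> L) : A -> L :=
  fun x => inf (fun c => exists y, c = res (phi x y) (lam y)).

Definition inK {A B : Type} (phi : A -> B -> L) (mu : A -> L) : Prop :=
  phiA phi (phiE phi mu) = mu.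

Definition sub {X : Type} (X' : X -> Prop) := {x : X | X' x}.

Definition restr {X Y : Type} (phi : X -> Y -> L) (X' : X -> Prop) (Y' : Y -> Prop)
  : sub X' -> sub Y' -> L := fun x y => phi (proj1_sig x) (proj1_sig y).
Definition restrY {X Y : Type} (phi : X -> Y -> L) (Y' : Y -> Prop)
  : X -> sub Y' -> L := fun x y => phi x (proj1_sig y).

Definition restrF {X : Type} (X' : X -> Prop) (mu : X -> L) : sub X' -> L :=
  fun x => mu (proj1_sig x).

Definition ext0 {X : Type} (X' : X -> Prop) (mu' : sub X' -> L) : X -> L :=
  fun x => match excluded_middle_informative (X' x) with
           | left h => mu' (exist _ x h)
           | right _ => bot
           end.

Definition S1 {X Y : Type} (phi : X -> Y -> L) (X' : X -> Prop) (Y' : Y -> Prop)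
  (mu : X -> L) : sub X' -> L :=
  phiA (restr phi X' Y') (phiE (restr phi X' Y') (restrF X' mu)).
Definition S2 {X Y : Type} (phi : X -> Y -> L) (X' : X -> Prop) (Y' : Y -> Prop)
  (mu : X -> L) : sub X' -> L :=
  restrF X' (phiA (restrY phi Y') (phiE (restrY phi Y') mu)).
Definition F1 {X Y : Type} (phi : X -> Y -> L) (X' : X -> Prop) (Y' : Y -> Prop)
  (mu' : sub X' -> L) : X -> L :=
  phiA phi (phiE phi (ext0 X' mu')).
Definition F2 {X Y : Type} (phi : X -> Y -> L) (X' : X -> Prop) (Y' : Y -> Prop)
  (mu' : sub X' -> L) : X -> L :=
  phiA (restrY phi Y') (phiE (restrY phi Y') (ext0 X' mu')).

End Ops.

(* Since [underline mu'] vanishes outside X', it generates the same fuzzy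
   attribute set over Y' as [mu'] does in the subcontext, so [F2 mu'] restricts
   on X' to the closure of [mu'] in [phi_{X',Y'}], i.e. to [mu'] itself.
   Dropping attributes only weakens the infimum defining [phi^forall], whence
   [underline mu' <= F1 mu' <= F2 mu'].  Restricting to X' squeezes [F1 mu']
   onto [mu'] as well, and closing in [phi_{X,Y'}] squeezes it onto [F2 mu']. *)

From Stdlib Require Import FunctionalExtensionality ProofIrrelevance ClassicalEpsilon.

Section Closure.
Context {L : crl}.

Definition leF {A : Type} (f g : A -> L) : Prop := forall x, le L (f x) (g x).

Definition cl {A B : Type} (chi : A -> B -> L) (mu : A -> L) : A -> L :=
  phiA chi (phiE chi mu).

Lemma leF_refl {A : Type} (f : A -> L) : leF f f.
Proof. intro; apply le_refl. Qed.

Lemma leF_trans {A : Type} (f g h : A -> L) : leF f g -> leF g h -> leF f h.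
Proof. intros Hfg Hgh x; eapply le_trans; eauto. Qed.

Lemma leF_antisym {A : Type} (f g : A -> L) : leF f g -> leF g f -> f = g.
Proof. intros Hfg Hgf; apply functional_extensionality; intro; apply le_antisym; auto. Qed.

Lemma phiE_galois {A B : Type} (chi : A -> B -> L) mu lam :
  leF (phiE chi mu) lam <-> leF mu (phiA chi lam).
Proof.
  split; intros H.
  - intro x; apply inf_greatest; intros c [y ->].
    apply residuation; eapply le_trans; [| apply (H y)].
    apply sup_ub; eauto.
  - intro y; apply sup_least; intros c [x ->].
    apply residuation; eapply le_trans; [apply (H x) |].
    apply inf_lb; eauto.
Qed.

Lemma cl_ext {A B : Type} (chi : A -> B -> L) mu : leF mu (cl chi mu).
Proof. apply phiE_galois, leF_refl. Qed.

Lemma phiE_phiA_le {A B : Type} (chi : A -> B -> L) lam : leF (phiE chi (phiA chi lam)) lam.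
Proof. apply phiE_galois, leF_refl. Qed.

Lemma phiE_mono {A B : Type} (chi : A -> B -> L) mu nu :
  leF mu nu -> leF (phiE chi mu) (phiE chi nu).
Proof. intros H; apply phiE_galois; eapply leF_trans; [exact H | apply cl_ext]. Qed.

Lemma phiA_mono {A B : Type} (chi : A -> B -> L) lam lam' :
  leF lam lam' -> leF (phiA chi lam) (phiA chi lam').
Proof. intros H; apply phiE_galois; eapply leF_trans; [apply phiE_phiA_le | exact H]. Qed.

Lemma cl_mono {A B : Type} (chi : A -> B -> L) mu nu : leF mu nu -> leF (cl chi mu) (cl chi nu).
Proof. intros H; apply phiA_mono, phiE_mono, H. Qed.

Lemma cl_idem {A B : Type} (chi : A -> B -> L) mu : cl chi (cl chi mu) = cl chi mu.
Proof. apply leF_antisym; [apply phiA_mono, phiE_phiA_le | apply cl_ext]. Qed.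

Lemma cl_sandwich {A B : Type} (chi : A -> B -> L) mu nu :
  leF mu nu -> leF nu (cl chi mu) -> cl chi nu = cl chi mu.
Proof.
  intros Hmu Hnu; apply leF_antisym.
  - rewrite <- (cl_idem chi mu); apply cl_mono, Hnu.
  - apply cl_mono, Hmu.
Qed.

End Closure.

Section Subcontext.
Context {L : crl} {X Y : Type} (phi : X -> Y -> L) (X' : X -> Prop) (Y' : Y -> Prop).

Lemma restrF_mono (mu nu : X -> L) : leF mu nu -> leF (restrF X' mu) (restrF X' nu).
Proof. intros H x'; apply H. Qed.

Lemma restrF_ext0 (mu' : sub X' -> L) : restrF X' (ext0 X' mu') = mu'.
Proof.
  apply functional_extensionality; intros [x hx]; unfold restrF, ext0; simpl.
  destruct (excluded_middle_informative (X' x)) as [h | n]; [| contradiction].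
  now rewrite (proof_irrelevance _ h hx).
Qed.

Lemma phiE_restrY_ext0 (mu' : sub X' -> L) :
  phiE (restrY phi Y') (ext0 X' mu') = phiE (restr phi X' Y') mu'.
Proof.
  apply leF_antisym; intro y; apply sup_least.
  - intros c [x ->]; unfold ext0.
    destruct (excluded_middle_informative (X' x)) as [h | n].
    + apply sup_ub; exists (exist _ x h); reflexivity.
    + apply residuation, bot_le.
  - intros c [x' ->]; apply sup_ub; exists (proj1_sig x').
    replace (mu' x') with (restrF X' (ext0 X' mu') x') by now rewrite restrF_ext0.
    reflexivity.
Qed.

Lemma phiA_le_phiA_restrY (lam : Y -> L) :
  leF (phiA phi lam) (phiA (restrY phi Y') (fun y' => lam (proj1_sig y'))).
Proof.
  intro x; apply inf_greatest; intros c [y' ->].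
  apply inf_lb; exists (proj1_sig y'); reflexivity.
Qed.

Lemma F1_le_F2 (mu' : sub X' -> L) : leF (F1 phi X' Y' mu') (F2 phi X' Y' mu').
Proof. apply phiA_le_phiA_restrY. Qed.

Lemma ext0_le_F1 (mu' : sub X' -> L) : leF (ext0 X' mu') (F1 phi X' Y' mu').
Proof. apply cl_ext. Qed.

Lemma restrF_F2 (mu' : sub X' -> L) :
  restrF X' (F2 phi X' Y' mu') = cl (restr phi X' Y') mu'.
Proof. unfold F2; rewrite phiE_restrY_ext0; reflexivity. Qed.

Lemma restrF_F1 (mu' : sub X' -> L) :
  inK (restr phi X' Y') mu' -> restrF X' (F1 phi X' Y' mu') = mu'.
Proof.
  intros hK; apply leF_antisym.
  - eapply leF_trans; [apply restrF_mono, F1_le_F2 |].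
    rewrite restrF_F2; unfold cl; rewrite hK; apply leF_refl.
  - rewrite <- (restrF_ext0 mu') at 1; apply restrF_mono, ext0_le_F1.
Qed.

Lemma cl_restrY_F1 (mu' : sub X' -> L) :
  cl (restrY phi Y') (F1 phi X' Y' mu') = F2 phi X' Y' mu'.
Proof. apply cl_sandwich; [apply ext0_le_F1 | apply F1_le_F2]. Qed.

Lemma cl_restrY_F2 (mu' : sub X' -> L) :
  cl (restrY phi Y') (F2 phi X' Y' mu') = F2 phi X' Y' mu'.
Proof. apply cl_idem. Qed.

End Subcontext.

Theorem mainTheorem2 (L : crl) (X Y : Type) (phi : X -> Y -> L)
    (X' : X -> Prop) (Y' : Y -> Prop) :
  (forall mu' : sub X' -> L, inK (restr phi X' Y') mu' ->
     restrF X' (F1 phi X' Y' mu') = restrF X' (F2 phi X' Y' mu')) /\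
  (forall mu' : sub X' -> L, inK (restr phi X' Y') mu' ->
     S1 phi X' Y' (F1 phi X' Y' mu') = mu' /\
     S1 phi X' Y' (F2 phi X' Y' mu') = mu' /\
     S2 phi X' Y' (F1 phi X' Y' mu') = mu' /\
     S2 phi X' Y' (F2 phi X' Y' mu') = mu').
Proof.
  assert (HF2 : forall mu', inK (restr phi X' Y') mu' -> restrF X' (F2 phi X' Y' mu') = mu')
    by (intros mu' hK; rewrite restrF_F2; exact hK).
  split.
  - intros mu' hK; rewrite restrF_F1, HF2; auto.
  - intros mu' hK; unfold S1, S2.
    fold (cl (restrY phi Y') (F1 phi X' Y' mu')) (cl (restrY phi Y') (F2 phi X' Y' mu')).
    rewrite cl_restrY_F1, cl_restrY_F2, restrF_F1, HF2 by exact hK.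
    repeat split; exact hK.
Qed.
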